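(* Let $F$ be a field of characteristic $0$, $\tilde H$ a connected linear algebraic group over $F$, and $V$ a regular irreducible representation of $\tilde H$ defined over $F$. Then for all subspaces $W,W'\subseteq V$ there exists $\tilde h\in\tilde H$ such that $$\dim\bigl[(\tilde h.W)\cap W'\bigr]\le\frac{\dim W}{\dim V}\dim W'.$$ Moreover, the set of such $\tilde h$ forms a Zariski open subset of $\tilde H$.
   Context: Irreducible means $V$ has no $\tilde H$-invariant subspace other than $0$ and $V$. *)

From HB Require Import structures.
From mathcomp Require Import all_boot all_order all_algebra.
From mathcomp Require Import mpoly.
Set Implicit Arguments. Unset Strict Implicit. Unset Printing Implicit Defensive.
Import Order.TTheory GRing.Theory Num.Theory.
Local Open Scope ring_scope.

(* We model a linear algebraic group over F by its group of F-points, a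
   Zariski-closed subgroup of GL_n(F).  Regular functions on
   GL_n(F) are p(entries of A) / det(A)^k with p a polynomial over F in the
   n*n matrix entries. *)

Section Defs.
Variable F : fieldType.

Definition entries (n : nat) (A : 'M[F]_n) : 'I_(n * n) -> F :=
  fun i => mxvec A 0 i.

Definition zclosed_in (n : nat) (S C : 'M[F]_n -> Prop) : Prop :=
  (forall A, C A -> S A) /\
  exists P : {mpoly F[n * n]} -> Prop,
    forall A, S A -> (C A <-> forall p, P p -> p.@[entries A] = 0).

Definition zopen_in (n : nat) (S U : 'M[F]_n -> Prop) : Prop :=
  (forall A, U A -> S A) /\ zclosed_in S (fun A => S A /\ ~ U A).

Definition GLpred (n : nat) : 'M[F]_n -> Prop := fun A => A \in unitmx.

Definition linear_algebraic_group (n : nat) (H : 'M[F]_n -> Prop) : Prop :=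
  [/\ zclosed_in (@GLpred n) H,
      H 1%:M,
      (forall A B, H A -> H B -> H (A *m B)) &
      (forall A, H A -> H (invmx A))].

Definition zconnected (n : nat) (H : 'M[F]_n -> Prop) : Prop :=
  forall C1 C2 : 'M[F]_n -> Prop,
    zclosed_in H C1 -> zclosed_in H C2 ->
    (forall A, H A -> C1 A \/ C2 A) ->
    (forall A, ~ (C1 A /\ C2 A)) ->
    (forall A, H A -> C1 A) \/ (forall A, H A -> C2 A).

Definition regular_rep (n m : nat) (H : 'M[F]_n -> Prop)
    (rho : 'M[F]_n -> 'M[F]_m) : Prop :=
  [/\ forall A, H A -> rho A \in unitmx,
      forall A B, H A -> H B -> rho (A *m B) = rho A *m rho B &
      exists (k : nat) (p : 'I_m -> 'I_m -> {mpoly F[n * n]}),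
        forall A, H A -> forall i j,
          rho A i j = (p i j).@[entries A] / (\det A) ^+ k].

(* Action of h on a subspace W of V (W = row space of the matrix W):
   vectors v are row vectors, h.v := v *m (rho h)^T (i.e. column vector
   rho h *m v^T). *)
Definition act (n m : nat) (rho : 'M[F]_n -> 'M[F]_m) (h : 'M[F]_n)
    (W : 'M[F]_m) : 'M[F]_m := W *m (rho h)^T.

Definition invariant_subspace (n m : nat) (H : 'M[F]_n -> Prop)
    (rho : 'M[F]_n -> 'M[F]_m) (W : 'M[F]_m) : Prop :=
  forall h, H h -> (act rho h W <= W)%MS.

Definition irreducible_rep (n m : nat) (H : 'M[F]_n -> Prop)
    (rho : 'M[F]_n -> 'M[F]_m) : Prop :=
  (0 < m)%N /\
  forall W : 'M[F]_m, invariant_subspace H rho W ->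
    (\rank W = 0)%N \/ (\rank W = m)%N.

End Defs.

From HB Require Import structures.
From mathcomp Require Import all_boot all_order all_algebra.
From mathcomp Require Import mpoly.
From mathcomp Require Import perm ring zify.
From Stdlib Require Import Classical ClassicalEpsilon.
Set Implicit Arguments. Unset Strict Implicit. Unset Printing Implicit Defensive.
Import Order.TTheory GRing.Theory Num.Theory.
Local Open Scope ring_scope.

(* For a subspace X of V let k(X) be the generic, i.e. minimal, value of
   dim(hW ∩ X) over h in H.  Ranks are lower semicontinuous, so k(X) is attained
   on a nonempty open set, and a connected group is irreducible, so any two such
   open sets meet.  Take X of maximal ratio k(X)/dim X, and of maximal
   dimension among those.  At a point generic for both X + hX and X ∩ hX, the
   inequality dim(A∩B) + dim(A∩C) <= dim(A∩(B+C)) + dim(A∩B∩C) shows that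
   X + hX has ratio at least that of X, hence hX ⊆ X.  By irreducibility
   X = V, where k(V) = dim W, so k(W') <= dim W dim W' / dim V, and the bound
   holds on the open set where dim(hW ∩ W') takes its generic value. *)

Lemma exists_minimizer (T : Type) (P : T -> Prop) (f : T -> nat) :
  (exists x, P x) -> exists x, P x /\ forall y, P y -> (f x <= f y)%N.
Proof.
case=> x0 Px0.
suff: forall k x, P x -> f x = k -> exists z, P z /\ forall y, P y -> (f z <= f y)%N.
  by move/(_ (f x0) x0 Px0 erefl).
elim/ltn_ind => k IH x Px fxk.
case: (classic (exists y, P y /\ (f y < k)%N)) => [[y [Py lt_y]]|no_lt].
  exact: (IH (f y) lt_y y Py).
exists x; split => // y Py; rewrite fxk leqNgt; apply/negP => lt_y.
by apply: no_lt; exists y.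
Qed.

Lemma exists_maximizer (T : Type) (P : T -> Prop) (f : T -> nat) (B : nat) :
  (exists x, P x) -> (forall x, P x -> (f x <= B)%N) ->
  exists x, P x /\ forall y, P y -> (f y <= f x)%N.
Proof.
move=> exP fB; have [x [Px xmin]] := exists_minimizer (fun x => B - f x)%N exP.
exists x; split => // y Py; have := xmin y Py.
have := fB x Px; have := fB y Py; lia.
Qed.

Lemma leq_scaled_ratio (N a b k1 k2 : nat) :
  (0 < N)%N -> (0 < a)%N -> (0 < b)%N -> (a %| N)%N -> (b %| N)%N ->
  (k1 * (N %/ a) <= k2 * (N %/ b))%N = (k1 * b <= k2 * a)%N.
Proof.
move=> N_gt0 a_gt0 b_gt0 /divnK Na /divnK Nb.
rewrite -(@leq_pmul2r (a * b)) ?muln_gt0 ?a_gt0 //.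
have -> : (k1 * (N %/ a) * (a * b) = k1 * b * N)%N.
  by move: (N %/ a)%N Na => u <-; ring.
have -> : (k2 * (N %/ b) * (a * b) = k2 * a * N)%N.
  by move: (N %/ b)%N Nb => u <-; ring.
by rewrite leq_pmul2r.
Qed.

Lemma capmx_rank_supermodular (F : fieldType) m1 m2 m3 n
    (A : 'M[F]_(m1, n)) (B : 'M[F]_(m2, n)) (C : 'M[F]_(m3, n)) :
  (\rank (A :&: B) + \rank (A :&: C)
     <= \rank (A :&: (B + C)) + \rank (A :&: (B :&: C)))%N%MS.
Proof.
rewrite -mxrank_sum_cap; apply: leq_add; apply: mxrankS.
  by rewrite addsmx_sub !capmxS ?addsmxSl ?addsmxSr.
rewrite [X in (_ <= X)%MS]capmxA.
by apply: capmxS; [apply: submx_refl | apply: capmxSr].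
Qed.

Section Group.
Variables (F : fieldType) (n : nat) (H : 'M[F]_n -> Prop).
Hypothesis H_unit : forall A, H A -> A \in unitmx.
Hypothesis H_1 : H 1%:M.
Hypothesis H_mul : forall A B, H A -> H B -> H (A *m B).
Hypothesis H_inv : forall A, H A -> H (invmx A).
Hypothesis H_conn : zconnected H.

Lemma det_neq0 x : H x -> \det x != 0.
Proof. by move=> /H_unit; rewrite unitmxE unitfE. Qed.

Definition det_mpoly : {mpoly F[n * n]} :=
  \det (\matrix_(i, j) 'X_(mxvec_index i j)).

Lemma meval_det_mpoly x : det_mpoly.@[entries x] = \det x.
Proof.
rewrite /det_mpoly -det_map_mx; congr (\det _); apply/matrixP => i j.
by rewrite !mxE /= mevalXU /entries mxvecE.
Qed.

Definition regular_fun (f : 'M[F]_n -> F) :=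
  exists (p : {mpoly F[n * n]}) (k : nat),
    forall x, H x -> f x = p.@[entries x] / (\det x) ^+ k.

Lemma regular_fun_eq f g :
  (forall x, H x -> f x = g x) -> regular_fun g -> regular_fun f.
Proof. by move=> fg [p [k gE]]; exists p, k => x Hx; rewrite fg // gE. Qed.

Lemma regular_fun_const c : regular_fun (fun _ => c).
Proof. by exists c%:MP, 0%N => x _; rewrite mevalC expr0 divr1. Qed.

Lemma regular_funD f g :
  regular_fun f -> regular_fun g -> regular_fun (fun x => f x + g x).
Proof.
case=> p [k fE] [q [l gE]].
exists (p * det_mpoly ^+ l + q * det_mpoly ^+ k), (k + l)%N => x Hx.
rewrite fE // gE // mevalD !mevalM !rmorphXn /= meval_det_mpoly exprD.
have dk : \det x ^+ k != 0 by rewrite expf_neq0 // det_neq0.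
have dl : \det x ^+ l != 0 by rewrite expf_neq0 // det_neq0.
by move: (\det x ^+ k) (\det x ^+ l) dk dl => a b a0 b0; field; rewrite a0 b0.
Qed.

Lemma regular_funM f g :
  regular_fun f -> regular_fun g -> regular_fun (fun x => f x * g x).
Proof.
case=> p [k fE] [q [l gE]]; exists (p * q), (k + l)%N => x Hx.
by rewrite fE // gE // mevalM exprD invfM; ring.
Qed.

Lemma regular_fun_sum (I : Type) (r : seq I) (G : I -> 'M[F]_n -> F) :
  (forall i, regular_fun (G i)) -> regular_fun (fun x => \sum_(i <- r) G i x).
Proof.
move=> G_reg; elim: r => [|i r IH].
  by apply: regular_fun_eq (regular_fun_const 0) => x _; rewrite big_nil.
apply: regular_fun_eq (regular_funD (G_reg i) IH) => x _; exact: big_cons.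
Qed.

Lemma regular_fun_prod (I : Type) (r : seq I) (G : I -> 'M[F]_n -> F) :
  (forall i, regular_fun (G i)) -> regular_fun (fun x => \prod_(i <- r) G i x).
Proof.
move=> G_reg; elim: r => [|i r IH].
  by apply: regular_fun_eq (regular_fun_const 1) => x _; rewrite big_nil.
apply: regular_fun_eq (regular_funM (G_reg i) IH) => x _; exact: big_cons.
Qed.

Lemma regular_fun_neq0 f : regular_fun f ->
  exists p : {mpoly F[n * n]}, forall x, H x -> (f x != 0) = (p.@[entries x] != 0).
Proof.
case=> p [k fE]; exists p => x Hx.
by rewrite fE // mulf_eq0 invr_eq0 expf_eq0 (negPf (det_neq0 Hx)) andbF orbF.
Qed.

Lemma zopen_in_nonvanishing (U : 'M[F]_n -> Prop) :
  (forall x, U x -> H x) ->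
  (forall x, U x -> exists f, [/\ regular_fun f, f x != 0 &
     forall y, H y -> f y != 0 -> U y]) ->
  zopen_in H U.
Proof.
move=> UH U_nbhd; split => //; split; first by move=> A [].
exists (fun p : {mpoly F[n * n]} => forall y, H y -> p.@[entries y] != 0 -> U y).
move=> A HA; split=> [[_ nUA] p p_sub|p_sub].
  by apply/eqP; apply: contraT => pA; case: nUA; apply: p_sub pA.
split => // UA; have [f [f_reg fA f_sub]] := U_nbhd A UA.
have [p pE] := regular_fun_neq0 f_reg.
move: fA; rewrite pE // => /eqP; apply; apply: p_sub => y Hy py.
by apply: f_sub; rewrite ?pE.
Qed.

Lemma zclosed_in_of_open_compl (C : 'M[F]_n -> Prop) :
  (forall x, C x -> H x) -> zopen_in H (fun x => H x /\ ~ C x) -> zclosed_in H C.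
Proof.
move=> CH [_ [_ [P PE]]]; split => //; exists P => A HA.
apply: iff_trans (PE A HA); split=> [CA|[_ nnCA]]; first by split=> // -[].
by apply: NNPP => nCA; apply: nnCA.
Qed.

(* Openness of G is asked as a basic neighbourhood of each x in H that x^-1
   carries into G. *)
Lemma zconnected_open_subgroup (G : 'M[F]_n -> Prop) :
  G 1%:M -> (forall x, G x -> H x) ->
  (forall x y, G x -> G y -> G (x *m y)) -> (forall x, G x -> G (invmx x)) ->
  (forall x, H x -> exists f, [/\ regular_fun f, f x != 0 &
     forall y, H y -> f y != 0 -> G (invmx x *m y)]) ->
  forall x, H x -> G x.
Proof.
move=> G1 GH G_mul G_inv G_nbhd.
have G_open : zopen_in H G.
  apply: zopen_in_nonvanishing => // x Gx.
  have [f [f_reg fx f_sub]] := G_nbhd x (GH x Gx).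
  exists f; split => // y Hy fy.
  by rewrite -(mulKVmx (H_unit (GH x Gx)) y); apply: G_mul (f_sub y Hy fy).
have Gc_open : zopen_in H (fun x => H x /\ ~ G x).
  apply: zopen_in_nonvanishing => [x [] //|x [Hx nGx]].
  have [f [f_reg fx f_sub]] := G_nbhd x Hx.
  exists f; split => // y Hy fy; split => // Gy; apply: nGx.
  have Gxy := f_sub y Hy fy; have xy_unit := H_unit (GH _ Gxy).
  suff -> : x = y *m invmx (invmx x *m y) by apply: G_mul Gy (G_inv _ Gxy).
  apply: (canRL (mulmxK xy_unit)); exact: (mulKVmx (H_unit Hx)).
have G_or_compl x : H x -> G x \/ (H x /\ ~ G x).
  by move=> Hx; case: (classic (G x)) => Gx; [left | right].
have [//|G_compl] := H_conn (zclosed_in_of_open_compl GH Gc_open) G_open.2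
  G_or_compl (fun x '(conj Gx (conj _ nGx)) => nGx Gx).
by case: (G_compl _ (GH _ G1)).
Qed.

Section Representation.
Variables (m : nat) (rho : 'M[F]_n -> 'M[F]_m).
Hypothesis rho_unit : forall A, H A -> rho A \in unitmx.
Hypothesis rhoM : forall A B, H A -> H B -> rho (A *m B) = rho A *m rho B.
Hypothesis rho_regular : forall i j, regular_fun (fun x => rho x i j).

(* Adjoining a trivial summand makes every polynomial of degree <= D in the
   coefficients of rho (constants included) a form of degree exactly D in those
   of rho_aug; forms of one fixed degree have finitely many coordinates and are
   stable under translations, which the irreducibility argument needs. *)
Definition rho_aug x : 'M[F]_(1 + m) := block_mx 1%:M 0 0 (rho x).

Lemma rho_augM x y : H x -> H y -> rho_aug (x *m y) = rho_aug x *m rho_aug y.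
Proof.
move=> Hx Hy; rewrite /rho_aug mulmx_block rhoM // !mulmx0 !mul0mx !addr0 !add0r.
by rewrite mulmx1.
Qed.

Lemma regular_rho_aug i j : regular_fun (fun x => rho_aug x i j).
Proof.
rewrite /rho_aug -(splitK i) -(splitK j).
case: (split i) => i'; case: (split j) => j' /=.
- apply: regular_fun_eq (regular_fun_const (1%:M i' j')) => x _.
  by rewrite block_mxEul.
- by apply: regular_fun_eq (regular_fun_const 0) => x _; rewrite block_mxEur mxE.
- by apply: regular_fun_eq (regular_fun_const 0) => x _; rewrite block_mxEdl mxE.
- by apply: regular_fun_eq (rho_regular i' j') => x _; rewrite block_mxEdr.
Qed.

Definition multi_index D :=
  ({ffun 'I_D -> 'I_(1 + m)} * {ffun 'I_D -> 'I_(1 + m)})%type.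

Definition coef_monomial D x (s : multi_index D) : F :=
  \prod_(t < D) rho_aug x (s.1 t) (s.2 t).

Definition coef_form D (f : 'M[F]_n -> F) :=
  exists r : seq (F * multi_index D),
    forall x, H x -> f x = \sum_(p <- r) p.1 * coef_monomial x p.2.

Lemma coef_monomialM D x y (I J : {ffun 'I_D -> 'I_(1 + m)}) : H x -> H y ->
  coef_monomial (x *m y) (I, J) =
    \sum_(K : {ffun 'I_D -> 'I_(1 + m)})
      coef_monomial x (I, K) * coef_monomial y (K, J).
Proof.
move=> Hx Hy; rewrite /coef_monomial /=.
under eq_bigr => t _ do rewrite rho_augM // mxE.
by rewrite bigA_distr_bigA /=; apply: eq_bigr => K _; rewrite -big_split.
Qed.

Lemma coef_form_eq D f g :
  (forall x, H x -> f x = g x) -> coef_form D g -> coef_form D f.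
Proof. by move=> fg [r gE]; exists r => x Hx; rewrite fg // gE. Qed.

Lemma coef_form_regular D f : coef_form D f -> regular_fun f.
Proof.
case=> r fE; apply: regular_fun_eq fE _; apply: regular_fun_sum => p.
apply: regular_funM; first exact: regular_fun_const.
by apply: regular_fun_prod => t; apply: regular_rho_aug.
Qed.

Lemma coef_form_const D c : coef_form D (fun _ => c).
Proof.
pose o : 'I_(1 + m) := lshift m ord0.
exists [:: (c, ([ffun=> o], [ffun=> o]))] => x _.
rewrite big_seq1 /coef_monomial /= big1 ?mulr1 // => t _.
by rewrite !ffunE /rho_aug block_mxEul mxE.
Qed.

Lemma coef_form_coef i j : coef_form 1 (fun x => rho_aug x i j).
Proof.
exists [:: (1, ([ffun=> i], [ffun=> j]))] => x _.
by rewrite big_seq1 /coef_monomial big_ord1 !ffunE mul1r.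
Qed.

Lemma coef_formD D f g :
  coef_form D f -> coef_form D g -> coef_form D (fun x => f x + g x).
Proof. by case=> r fE [q gE]; exists (r ++ q) => x Hx; rewrite big_cat fE // gE. Qed.

Lemma coef_formZ D c f : coef_form D f -> coef_form D (fun x => c * f x).
Proof.
case=> r fE; exists [seq (c * p.1, p.2) | p <- r] => x Hx.
by rewrite big_map fE // mulr_sumr; apply: eq_bigr => p _; rewrite mulrA.
Qed.

Lemma coef_form_sum D (I : Type) (r : seq I) (G : I -> 'M[F]_n -> F) :
  (forall i, coef_form D (G i)) -> coef_form D (fun x => \sum_(i <- r) G i x).
Proof.
move=> G_form; elim: r => [|i r IH].
  by apply: coef_form_eq (coef_form_const D 0) => x _; rewrite big_nil.
apply: coef_form_eq (coef_formD (G_form i) IH) => x _; exact: big_cons.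
Qed.

Definition ffun_cat (T : Type) D E (I : {ffun 'I_D -> T}) (J : {ffun 'I_E -> T}) :
  {ffun 'I_(D + E) -> T} :=
  [ffun t => match split t with inl a => I a | inr b => J b end].

Lemma coef_monomial_cat D E x (s : multi_index D) (s' : multi_index E) :
  coef_monomial x (ffun_cat s.1 s'.1, ffun_cat s.2 s'.2) =
    coef_monomial x s * coef_monomial x s'.
Proof.
rewrite /coef_monomial big_split_ord /=.
congr (_ * _); apply: eq_bigr => t _.
  by rewrite !ffunE (unsplitK (inl t)).
by rewrite !ffunE (unsplitK (inr t)).
Qed.

Lemma coef_formM D E f g :
  coef_form D f -> coef_form E g -> coef_form (D + E) (fun x => f x * g x).
Proof.
case=> r fE [q gE].
exists [seq (p.1 * p'.1, (ffun_cat p.2.1 p'.2.1, ffun_cat p.2.2 p'.2.2))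
         | p <- r, p' <- q] => x Hx.
rewrite big_allpairs_dep fE // gE // mulr_suml; apply: eq_bigr => p _.
by rewrite mulr_sumr; apply: eq_bigr => p' _ /=; rewrite coef_monomial_cat; ring.
Qed.

Lemma coef_form_prod D (G : 'I_D -> 'M[F]_n -> F) :
  (forall i, coef_form 1 (G i)) -> coef_form D (fun x => \prod_i G i x).
Proof.
elim: D G => [|D IH] G G_form.
  by apply: coef_form_eq (coef_form_const 0 1) => x _; rewrite big_ord0.
apply: coef_form_eq (coef_formM (G_form ord0) (IH _ (fun i => G_form _))) => x _.
exact: big_ord_recl.
Qed.

Lemma coef_form_det D (A : 'I_D -> 'I_D -> 'M[F]_n -> F) :
  (forall i j, coef_form 1 (A i j)) ->
  coef_form D (fun x => \det (\matrix_(i, j) A i j x)).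
Proof.
move=> A_form; pose G x := \sum_(s : 'S_D) (-1) ^+ s * \prod_i A i (s i) x.
have G_form : coef_form D G.
  by apply: coef_form_sum => s; apply: coef_formZ; apply: coef_form_prod.
apply: coef_form_eq G_form => x _.
by apply: eq_bigr => s _; congr (_ * _); apply: eq_bigr => i _; rewrite mxE.
Qed.

Lemma coef_form_mulr D f w :
  H w -> coef_form D f -> coef_form D (fun x => f (x *m w)).
Proof.
move=> Hw [r fE].
exists [seq (p.1 * coef_monomial w (K, p.2.2), (p.2.1, K))
         | p <- r, K <- index_enum {ffun 'I_D -> 'I_(1 + m)}] => x Hx.
rewrite big_allpairs_dep (fE _ (H_mul Hx Hw)); apply: eq_bigr => -[c [I J]] _ /=.
by rewrite coef_monomialM // mulr_sumr; apply: eq_bigr => K _; ring.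
Qed.

Lemma coef_form_mull D f w :
  H w -> coef_form D f -> coef_form D (fun x => f (w *m x)).
Proof.
move=> Hw [r fE].
exists [seq (p.1 * coef_monomial w (p.2.1, K), (K, p.2.2))
         | p <- r, K <- index_enum {ffun 'I_D -> 'I_(1 + m)}] => x Hx.
rewrite big_allpairs_dep (fE _ (H_mul Hw Hx)); apply: eq_bigr => -[c [I J]] _ /=.
by rewrite coef_monomialM // mulr_sumr; apply: eq_bigr => K _; ring.
Qed.

Lemma coef_form_rank_minor p q (M : 'M[F]_n -> 'M[F]_(p, q)) x :
  (forall i j, coef_form 1 (fun y => M y i j)) ->
  exists D c, [/\ coef_form D c, c x != 0 &
    forall y, H y -> c y != 0 -> (\rank (M x) <= \rank (M y))%N].
Proof.
move=> M_form; set A := M x; pose f := maxrankfun A.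
have fullT : row_full (rowsub f A)^T.
  by rewrite /row_full mxrank_tr; exact: maxrowsub_free.
pose g := fullrankfun fullT.
pose minor y := \matrix_(i, j) M y (f i) (g j).
have minorE y : (minor y)^T = rowsub g (rowsub f (M y))^T.
  by apply/matrixP => i j; rewrite !mxE.
exists (\rank A), (fun y => \det (minor y)); split.
- by apply: coef_form_det => i j; apply: M_form.
- by rewrite -det_tr minorE -unitfE -unitmxE fullrowsub_unit.
move=> y _; rewrite -unitfE -unitmxE => /mxrank_unit <-.
rewrite -mxrank_tr minorE; apply: leq_trans (mxrankS (rowsub_sub _ _)) _.
by rewrite mxrank_tr mxrankS ?rowsub_sub.
Qed.

Definition monomial_vec D x : 'rV[F]_#|{: multi_index D}| :=
  \row_i coef_monomial x (enum_val i).

Definition translation_mx D w : 'M[F]_#|{: multi_index D}| :=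
  \matrix_(i, j) (((enum_val i).1 == (enum_val j).1)%:R *
                  coef_monomial w ((enum_val i).2, (enum_val j).2)).

Lemma monomial_vecM D x w : H x -> H w ->
  monomial_vec D (x *m w) = monomial_vec D x *m translation_mx D w.
Proof.
move=> Hx Hw; apply/rowP => i; rewrite !mxE.
case Ei: (enum_val i) => [I J]; rewrite coef_monomialM //.
under [RHS]eq_bigr => j _ do rewrite !mxE Ei.
rewrite -(big_enum_val (fun s => coef_monomial x s *
  ((s.1 == I)%:R * coef_monomial w (s.2, J)))).
rewrite -(pair_bigA _ (fun I' K => coef_monomial x (I', K) *
  ((I' == I)%:R * coef_monomial w (K, J)))) /=.
rewrite [RHS](bigD1 I) //= [X in _ + X]big1 ?addr0 => [|I' /negPf nI].
  by apply: eq_bigr => K _; rewrite eqxx mul1r.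
by apply: big1 => K _; rewrite nI mul0r mulr0.
Qed.

Lemma coef_form_vec D f : coef_form D f ->
  exists phi : 'cV[F]_#|{: multi_index D}|,
    forall x, H x -> f x = (monomial_vec D x *m phi) 0 0.
Proof.
case=> r fE; exists (\col_i \sum_(p <- r | p.2 == enum_val i) p.1) => x Hx.
rewrite fE // mxE; under [RHS]eq_bigr => i _ do rewrite !mxE.
rewrite -(big_enum_val (fun s => coef_monomial x s * \sum_(p <- r | p.2 == s) p.1)).
under [RHS]eq_bigr => s _ do rewrite mulr_sumr big_mkcond /=.
rewrite exchange_big /=; apply: eq_bigr => p _.
rewrite (bigD1 p.2) //= eqxx [X in _ + X]big1 ?addr0 => [|s ns].
  by rewrite mulrC.
by rewrite eq_sym (negPf ns).
Qed.

Definition somewhere_nonzero (f : 'M[F]_n -> F) := exists y, H y /\ f y != 0.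

(* A point y is sent to the vector monomial_vec D y of the values of all
   monomials of degree D; forms of degree D are linear functionals of it
   (coef_form_vec) and right translation acts on it linearly (monomial_vecM).
   A subspace S0 of minimal rank containing monomial_vec D y for y in some
   nonempty basic open set contains it for all y in H, because its stabilizer
   under right translation is an open subgroup.  Applied to S0 :&: kermx phi,
   this shows that a form vanishing on a nonempty basic open set vanishes. *)
Definition generically_in D (S : 'M[F]_#|{: multi_index D}|) :=
  exists E c, [/\ coef_form E c, somewhere_nonzero c &
    forall y, H y -> c y != 0 -> (monomial_vec D y <= S)%MS].
Arguments generically_in : clear implicits.

Lemma exists_min_generically_in D :
  exists S, generically_in D S /\
    forall T, generically_in D T -> (\rank S <= \rank T)%N.
Proof.
apply: exists_minimizer; exists 1%:M, 0%N, (fun _ => 1); split.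
- exact: coef_form_const.
- by exists 1%:M; rewrite oner_neq0.
- by move=> y _ _; rewrite submx1.
Qed.

Section MinimalGeneric.
Variables (D E0 : nat) (S0 : 'M[F]_#|{: multi_index D}|).
Variables (c0 : 'M[F]_n -> F) (z0 : 'M[F]_n).
Hypothesis c0_form : coef_form E0 c0.
Hypotheses (H_z0 : H z0) (c0_z0 : c0 z0 != 0).
Hypothesis c0_sub : forall y, H y -> c0 y != 0 -> (monomial_vec D y <= S0)%MS.
Hypothesis S0_min : forall T, generically_in D T -> (\rank S0 <= \rank T)%N.

Local Notation inS0 z := (H z /\ (monomial_vec D z <= S0)%MS).

(* Minimality of S0, used on the open set where c0 x and c0 (x w) are both
   nonzero, against the intersection of S0 with its preimage under w. *)
Lemma inS0_mulr w z1 : H w -> H z1 -> c0 z1 != 0 -> c0 (z1 *m w) != 0 ->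
  forall z, inS0 z -> inS0 (z *m w).
Proof.
move=> Hw Hz1 c0_z1 c0_z1w.
pose Sw := kermx (translation_mx D w *m cokermx S0).
have SwE z : H z -> (monomial_vec D z <= Sw)%MS = (monomial_vec D (z *m w) <= S0)%MS.
  by move=> Hz; rewrite sub_kermx mulmxA -monomial_vecM // submxE.
have : generically_in D (S0 :&: Sw)%MS.
  exists (E0 + E0)%N, (fun x => c0 x * c0 (x *m w)); split.
  - exact: coef_formM (coef_form_mulr Hw c0_form).
  - by exists z1; rewrite mulf_neq0.
  move=> y Hy; rewrite mulf_eq0 negb_or => /andP [c0_y c0_yw].
  by rewrite sub_capmx c0_sub //= SwE // c0_sub //; apply: H_mul.
move=> /S0_min; rewrite (geq_leqif (mxrank_leqif_sup (capmxSl S0 Sw))) => S0_Sw.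
move=> z [Hz zS0]; split; first exact: H_mul.
by rewrite -SwE //; apply: submx_trans (capmxSr S0 Sw); apply: submx_trans S0_Sw.
Qed.

Local Notation stabilizer w := (H w /\ forall z, H z -> (inS0 z <-> inS0 (z *m w))).

Lemma stabilizer_of_overlap w z1 :
  H w -> H z1 -> c0 z1 != 0 -> c0 (z1 *m w) != 0 -> stabilizer w.
Proof.
move=> Hw Hz1 c0_z1 c0_z1w; split => // z Hz; split.
  exact: (inS0_mulr Hw Hz1 c0_z1 c0_z1w).
have c0_z1wV : c0 (z1 *m w *m invmx w) != 0 by rewrite mulmxK ?H_unit.
by move/(inS0_mulr (H_inv Hw) (H_mul Hz1 Hw) c0_z1w c0_z1wV); rewrite mulmxK ?H_unit.
Qed.

Lemma stabilizer_all : forall w, H w -> stabilizer w.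
Proof.
apply: (@zconnected_open_subgroup (fun w => stabilizer w)).
- by split => // z Hz; rewrite mulmx1.
- by move=> x [].
- move=> x y [Hx x_stab] [Hy y_stab]; split=> [|z Hz]; first exact: H_mul.
  by rewrite mulmxA; apply: iff_trans (x_stab z Hz) (y_stab _ (H_mul Hz Hx)).
- move=> x [Hx x_stab]; split=> [|z Hz]; first exact: H_inv.
  by apply: iff_sym; have := x_stab _ (H_mul Hz (H_inv Hx)); rewrite mulmxKV ?H_unit.
move=> x Hx; exists (fun y => c0 (z0 *m invmx x *m y)); split.
- exact: coef_form_regular (coef_form_mull (H_mul H_z0 (H_inv Hx)) c0_form).
- by rewrite mulmxKV ?H_unit.
move=> y Hy c0_y; apply: (stabilizer_of_overlap _ H_z0) => //.
  exact: H_mul (H_inv Hx) Hy.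
by rewrite mulmxA.
Qed.

Lemma monomial_vec_sub_min y : H y -> (monomial_vec D y <= S0)%MS.
Proof.
move=> Hy; have [_ /(_ z0 H_z0)] := stabilizer_all (H_mul (H_inv H_z0) Hy).
by rewrite mulKVmx ?H_unit // => -[/(_ (conj H_z0 (c0_sub H_z0 c0_z0))) []].
Qed.

End MinimalGeneric.

Lemma coef_form_irreducible D E a c :
  coef_form D a -> coef_form E c -> somewhere_nonzero c ->
  (forall y, H y -> c y != 0 -> a y = 0) -> forall y, H y -> a y = 0.
Proof.
move=> a_form c_form c_nz a_c.
have [phi aE] := coef_form_vec a_form.
have [S0 [[E0 [c0 [c0_form [z0 [Hz0 c0_z0]] c0_sub]]] S0_min]] :=
  exists_min_generically_in D.
have S0_min_sub := monomial_vec_sub_min c0_form Hz0 c0_z0 c0_sub S0_min.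
have : generically_in D (S0 :&: kermx phi)%MS.
  exists E, c; split => // y Hy c_y; rewrite sub_capmx S0_min_sub // sub_kermx.
  by apply/eqP/matrixP => i j; rewrite !ord1 [RHS]mxE -aE // a_c.
move=> /S0_min; rewrite (geq_leqif (mxrank_leqif_sup (capmxSl _ _))) => S0_ker.
move=> y Hy; rewrite aE //.
have := submx_trans (S0_min_sub y Hy) (submx_trans S0_ker (capmxSr _ _)).
by rewrite sub_kermx => /eqP ->; rewrite mxE.
Qed.

Lemma coef_form_nonzero_meet D E a c :
  coef_form D a -> coef_form E c -> somewhere_nonzero a -> somewhere_nonzero c ->
  exists y, [/\ H y, a y != 0 & c y != 0].
Proof.
move=> a_form c_form [y [Hy a_y]] c_nz; apply: NNPP => no_meet.
move/eqP: a_y; apply; apply: coef_form_irreducible a_form c_form c_nz _ y Hy.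
move=> z Hz c_z; apply/eqP; apply: contraT => a_z.
by case: no_meet; exists z.
Qed.

Lemma rank_act X h : H h -> \rank (act rho h X) = \rank X.
Proof. by move=> Hh; rewrite mxrankMfree // row_free_unit unitmx_tr rho_unit. Qed.

Section Intersections.
Variable W : 'M[F]_m.

Definition dim_act_cap (X : 'M[F]_m) h := \rank (act rho h W :&: X)%MS.

Lemma dim_act_cap_stack X h : H h ->
  (dim_act_cap X h + \rank (col_mx (act rho h W) X) = \rank W + \rank X)%N.
Proof.
move=> Hh; rewrite /dim_act_cap -(rank_act W Hh) -(mxrank_sum_cap (act rho h W) X).
by rewrite addnC (addsmxE _ _).1.
Qed.

Lemma dim_act_cap_upper_semicontinuous X x : H x ->
  exists D c, [/\ coef_form D c, c x != 0 &
    forall y, H y -> c y != 0 -> (dim_act_cap X y <= dim_act_cap X x)%N].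
Proof.
move=> Hx; pose M y := col_mx (act rho y W) X.
have M_form i j : coef_form 1 (fun y => M y i j).
  rewrite /M -(splitK i); case: (split i) => i' /=; last first.
    by apply: coef_form_eq (coef_form_const 1 (X i' j)) => y _; rewrite col_mxEd.
  have G_form k := coef_formZ (W i' k) (coef_form_coef (rshift 1 j) (rshift 1 k)).
  apply: coef_form_eq (coef_form_sum (index_enum 'I_m) G_form) => y _.
  by rewrite col_mxEu mxE; apply: eq_bigr => k _; rewrite /rho_aug block_mxEdr mxE.
have [D [c [c_form c_x c_rank]]] := coef_form_rank_minor x M_form.
exists D, c; split => // y Hy c_y; have := c_rank y Hy c_y.
by have := dim_act_cap_stack X Hx; have := dim_act_cap_stack X Hy; rewrite /M; lia.
Qed.

Lemma exists_min_dim_act_cap X : exists k,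
  (exists g, H g /\ dim_act_cap X g = k) /\ forall g, H g -> (k <= dim_act_cap X g)%N.
Proof.
have [g [Hg g_min]] := exists_minimizer (dim_act_cap X) (ex_intro H _ H_1).
by exists (dim_act_cap X g); split; [exists g | ].
Qed.

Definition generic_dim X :=
  proj1_sig (constructive_indefinite_description _ (exists_min_dim_act_cap X)).

Lemma generic_dimP X : (exists g, H g /\ dim_act_cap X g = generic_dim X) /\
  forall g, H g -> (generic_dim X <= dim_act_cap X g)%N.
Proof.
exact: proj2_sig (constructive_indefinite_description _ (exists_min_dim_act_cap X)).
Qed.

Lemma generic_dim_le_rank X : (generic_dim X <= \rank X)%N.
Proof. exact: leq_trans ((generic_dimP X).2 _ H_1) (mxrankS (capmxSr _ _)). Qed.

Lemma generic_dim_open X : exists D c, [/\ coef_form D c, somewhere_nonzero c &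
  forall y, H y -> c y != 0 -> dim_act_cap X y = generic_dim X].
Proof.
have [[g [Hg g_gen]] gen_min] := generic_dimP X.
have [D [c [c_form c_g c_usc]]] := dim_act_cap_upper_semicontinuous X Hg.
exists D, c; split => //; first by exists g.
move=> y Hy c_y; apply/eqP; rewrite eqn_leq gen_min // andbT -g_gen.
exact: c_usc.
Qed.

Lemma exists_common_generic X Y : exists g,
  [/\ H g, dim_act_cap X g = generic_dim X & dim_act_cap Y g = generic_dim Y].
Proof.
have [D [c [c_form c_nz c_gen]]] := generic_dim_open X.
have [E [a [a_form a_nz a_gen]]] := generic_dim_open Y.
have [g [Hg c_g a_g]] := coef_form_nonzero_meet c_form a_form c_nz a_nz.
by exists g; split; [| apply: c_gen | apply: a_gen].
Qed.

Lemma dim_act_cap_act X h g : H h -> H g ->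
  dim_act_cap (act rho h X) g = dim_act_cap X (invmx h *m g).
Proof.
move=> Hh Hg; have Hhg : H (invmx h *m g) by apply: H_mul (H_inv Hh) Hg.
have stackE : col_mx (act rho g W) (act rho h X) =
    col_mx (act rho (invmx h *m g) W) X *m (rho h)^T.
  by rewrite mul_col_mx /act -mulmxA -trmx_mul -rhoM // mulKVmx ?H_unit.
have := dim_act_cap_stack (act rho h X) Hg; have := dim_act_cap_stack X Hhg.
rewrite stackE mxrankMfree ?row_free_unit ?unitmx_tr ?rho_unit // rank_act //.
lia.
Qed.

Lemma generic_dim_act X h : H h -> generic_dim (act rho h X) = generic_dim X.
Proof.
move=> Hh; have [[g [Hg g_gen]] gen_min] := generic_dimP X.
have [[g' [Hg' g'_gen]] gen_min'] := generic_dimP (act rho h X).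
apply/eqP; rewrite eqn_leq; apply/andP; split.
  have Hhg := H_mul Hh Hg.
  by rewrite -g_gen -(mulKmx (H_unit Hh) g) -dim_act_cap_act // gen_min'.
have Hhg' := H_mul (H_inv Hh) Hg'.
by rewrite -g'_gen dim_act_cap_act // gen_min.
Qed.

Hypothesis rho_irr : irreducible_rep H rho.

Definition max_ratio X := (0 < \rank X)%N /\ forall Y, (0 < \rank Y)%N ->
  (generic_dim Y * \rank X <= generic_dim X * \rank Y)%N.

Lemma exists_max_ratio : exists X, max_ratio X.
Proof.
have rank_dvd (Y : 'M[F]_m) : (0 < \rank Y)%N -> (\rank Y %| m`!)%N.
  by move=> rY; apply: dvdn_fact; rewrite rY rank_leq_col.
(* The division is exact, so ratio_scaled Y is m`! times the ratio of Y. *)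
pose ratio_scaled (Y : 'M[F]_m) := (generic_dim Y * (m`! %/ \rank Y))%N.
suff [X [rX X_max]] : exists X, (0 < \rank X)%N /\
    forall Y, (0 < \rank Y)%N -> (ratio_scaled Y <= ratio_scaled X)%N.
  exists X; split => // Y rY.
  by rewrite -(@leq_scaled_ratio m`! (\rank Y) (\rank X)) ?fact_gt0 ?rank_dvd ?X_max.
apply: (exists_maximizer (B := m`!)) => [|Y rY].
  by exists 1%:M; rewrite mxrank1 rho_irr.1.
apply: leq_trans (leq_mul (generic_dim_le_rank Y) (leqnn _)) _.
by rewrite mulnC divnK ?rank_dvd.
Qed.

Lemma exists_max_ratio_max_rank :
  exists X, max_ratio X /\ forall Y, max_ratio Y -> (\rank Y <= \rank X)%N.
Proof. exact: exists_maximizer exists_max_ratio (fun Y _ => rank_leq_col Y). Qed.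

Lemma max_ratio_addsmx_act X h : max_ratio X -> H h -> max_ratio (X + act rho h X)%MS.
Proof.
move=> [rX X_max] Hh; set X' := act rho h X.
have [g [Hg sum_gen cap_gen]] := exists_common_generic (X + X')%MS (X :&: X')%MS.
have super : (dim_act_cap X g + dim_act_cap X' g
                <= dim_act_cap (X + X')%MS g + dim_act_cap (X :&: X')%MS g)%N.
  exact: capmx_rank_supermodular.
have genX := (generic_dimP X).2 g Hg.
have := (generic_dimP X').2 g Hg; rewrite generic_dim_act // => genX'.
have := mxrank_sum_cap X X'; rewrite rank_act // => rank_sum.
have cap_ratio :
    (generic_dim (X :&: X')%MS * \rank X <= generic_dim X * \rank (X :&: X'))%N.
  have [r0|r_gt0] := posnP (\rank (X :&: X')%MS); last exact: X_max.
  by have := generic_dim_le_rank (X :&: X')%MS; rewrite r0 leqn0 => /eqP ->.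
have sum_ratio :
    (generic_dim X * \rank (X + X') <= generic_dim (X + X')%MS * \rank X)%N.
  (* 2 k(X) <= k(X + X') + k(X :&: X'), ranks sum to 2 dim X, and the
     ratio of X :&: X' is at most that of X. *)
  move: super cap_ratio rank_sum genX genX'; rewrite sum_gen cap_gen.
  move: (generic_dim X) (generic_dim (X + X')%MS) (generic_dim (X :&: X')%MS)
    (\rank X) (\rank (X + X')%MS) (\rank (X :&: X')%MS)
    (dim_act_cap X g) (dim_act_cap X' g) => k ks kc r rs rc d d'.
  nia.
split=> [|Y rY]; first exact: leq_trans rX (mxrankS (addsmxSl _ _)).
have := X_max Y rY; move: sum_ratio rX.
move: (generic_dim X) (generic_dim Y) (generic_dim (X + X')%MS)
  (\rank X) (\rank Y) (\rank (X + X')%MS) => k ky ks r ry rs.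
nia.
Qed.

Lemma max_ratio_invariant X : max_ratio X ->
  (forall Y, max_ratio Y -> (\rank Y <= \rank X)%N) -> invariant_subspace H rho X.
Proof.
move=> X_ratio X_rank h Hh.
have := X_rank _ (max_ratio_addsmx_act X_ratio Hh).
rewrite (geq_leqif (mxrank_leqif_sup (addsmxSl X _))) => sum_sub.
exact: submx_trans (addsmxSr _ _) sum_sub.
Qed.

Lemma generic_dim_full X : row_full X -> generic_dim X = \rank W.
Proof.
move=> X_full; have [[g [Hg <-]] _] := generic_dimP X.
by rewrite /dim_act_cap capmxT // rank_act.
Qed.

Lemma generic_dim_bound W' : (generic_dim W' * m <= \rank W * \rank W')%N.
Proof.
have [X [X_ratio X_rank]] := exists_max_ratio_max_rank.
have rX : \rank X = m.
  have [_ /(_ X (max_ratio_invariant X_ratio X_rank))] := rho_irr.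
  by case=> // r0; move: X_ratio.1; rewrite r0.
have [r0|r_gt0] := posnP (\rank W').
  by have := generic_dim_le_rank W'; rewrite r0 leqn0 => /eqP ->.
have X_full : row_full X by rewrite /row_full rX.
have := X_ratio.2 W' r_gt0.
by rewrite (generic_dim_full X_full) rX [(_ * \rank W')%N]mulnC.
Qed.

Lemma exists_act_cap_bound W' :
  exists h, H h /\ (dim_act_cap W' h * m <= \rank W * \rank W')%N.
Proof.
have [[g [Hg g_gen]] _] := generic_dimP W'.
by exists g; rewrite g_gen generic_dim_bound.
Qed.

Lemma zopen_act_cap_bound W' :
  zopen_in H (fun h => H h /\ (dim_act_cap W' h * m <= \rank W * \rank W')%N).
Proof.
apply: zopen_in_nonvanishing => [h [] //|h [Hh h_bound]].
have [D [c [c_form c_h c_usc]]] := dim_act_cap_upper_semicontinuous W' Hh.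
exists c; split => [||y Hy c_y]; [exact: coef_form_regular c_form | by [] |].
by split => //; apply: leq_trans h_bound; rewrite leq_mul2r c_usc ?orbT.
Qed.

End Intersections.
End Representation.
End Group.

Theorem theorem1p11 (F : fieldType) (n m : nat)
    (H : 'M[F]_n -> Prop) (rho : 'M[F]_n -> 'M[F]_m) :
  [pchar F] =i pred0 ->
  linear_algebraic_group H -> zconnected H ->
  regular_rep H rho -> irreducible_rep H rho ->
  forall W W' : 'M[F]_m,
    (exists h, H h /\
       (\rank (act rho h W :&: W')%MS * m <= \rank W * \rank W')%N) /\
    zopen_in H (fun h => H h /\
       (\rank (act rho h W :&: W')%MS * m <= \rank W * \rank W')%N).
Proof.
move=> _ [[H_unit _] H_1 H_mul H_inv] H_conn [rho_unit rhoM [k [p rhoE]]] rho_irr.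
move=> W W'.
have rho_regular i j : regular_fun H (fun x => rho x i j).
  by exists (p i j), k => x Hx; apply: rhoE.
split.
- exact: exists_act_cap_bound.
- exact: zopen_act_cap_bound.
Qed.
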